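(* Let $\mathcal A$ be a unital $C^*$-algebra, $a\in\mathcal A$, and $p,q\in\mathcal A$ projections such that $a$ is invertible up to $(p,q)$, with $(p,q)$-inverse $b$. Let $r_1,r_2,s_1,s_2\in\mathcal A$ be projections with $1-p=r_1+r_2$ and $1-q=s_1+s_2$. If $a$ is invertible up to $(1-r_1,1-s_1)$ and either $\|s_2ar_1\|<\|b\|^{-1}$ or $\|s_1ar_2\|<\|b\|^{-1}$, then $a$ is invertible up to $(1-r_2,1-s_2)$.
   Context: For $a\in\mathcal A$ and projections $p,q$ in a unital $C^*$-algebra $\mathcal A$, $a$ is invertible up to $(p,q)$ if there is $b\in\mathcal A$ with $b=(1-p)b(1-q)$, $(1-q)a(1-p)b=1-q$ and $b(1-q)a(1-p)=1-p$; $b$ is called the $(p,q)$-inverse of $a$. *)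

From mathcomp Require Import all_boot all_algebra.
From mathcomp Require Import all_classical all_reals all_analysis.
From mathcomp.real_closed Require Import complex.
Import numFieldNormedType.Exports.
Import GRing.Theory Num.Theory.
Local Open Scope ring_scope.
Local Open Scope complex_scope.

Set Implicit Arguments. Unset Strict Implicit. Unset Printing Implicit Defensive.

Record CStarAlg (R : realType) (A : completeNormedModType R[i]) := {
  cmul : A -> A -> A;
  cone : A;
  cstar : A -> A;
  cmulA : forall x y z, cmul x (cmul y z) = cmul (cmul x y) z;
  cmul1l : forall x, cmul cone x = x;
  cmul1r : forall x, cmul x cone = x;
  cmulDl : forall x y z, cmul (x + y) z = cmul x z + cmul y z;
  cmulDr : forall x y z, cmul x (y + z) = cmul x y + cmul x z;
  cmulZl : forall (k : R[i]) x y, cmul (k *: x) y = k *: cmul x y;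
  cmulZr : forall (k : R[i]) x y, cmul x (k *: y) = k *: cmul x y;
  cnorm_mul : forall x y, `|cmul x y| <= `|x| * `|y|;
  cstarD : forall x y, cstar (x + y) = cstar x + cstar y;
  cstarZ : forall (k : R[i]) x, cstar (k *: x) = k^* *: cstar x;
  cstarK : forall x, cstar (cstar x) = x;
  cstarM : forall x y, cstar (cmul x y) = cmul (cstar y) (cstar x);
  cstar_id : forall x, `|cmul (cstar x) x| = `|x| ^+ 2
}.

Section PQInverse.
Variables (R : realType) (A : completeNormedModType R[i]) (C : CStarAlg A).
Local Notation "x ** y" := (cmul C x y) (at level 40, left associativity).
Local Notation e := (cone C).

Definition is_projection (p : A) : Prop := cstar C p = p /\ p ** p = p.

Definition pq_inverse (p q a b : A) : Prop :=
  [/\ b = (e - p) ** b ** (e - q),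
      (e - q) ** a ** (e - p) ** b = e - q
    & b ** (e - q) ** a ** (e - p) = e - p].

Definition invertible_upto (p q a : A) : Prop := exists b, pq_inverse p q a b.
End PQInverse.

From HB Require Import structures.
From mathcomp Require Import all_boot all_algebra.
From mathcomp Require Import all_classical all_reals all_analysis.
From mathcomp.real_closed Require Import complex.
Import numFieldNormedType.Exports.
Import order.Order.TTheory GRing.Theory Num.Theory.
Local Open Scope classical_set_scope.
Local Open Scope ring_scope.

Set Implicit Arguments.
Unset Strict Implicit.
Unset Printing Implicit Defensive.

(* Put P = 1 - p, Q = 1 - q and M = Q a P, so that b inverts M from the
   Q-corner to the P-corner.  Let X be s2 a r1 (resp. s1 a r2).  Since
   ||b X|| < 1, the Neumann series inverts 1 - b X, and then N = P (1 - b X)^-1 b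
   inverts M - X between the same corners.  With respect to P = r1 + r2 and
   Q = s1 + s2 the element M - X is block triangular with diagonal corners
   s1 a r1, which is invertible by hypothesis, and s2 a r2; hence r2 N s2 inverts
   s2 a r2, i.e. a is invertible up to (1 - r2, 1 - s2). *)

Lemma idemD_mul2n_eq0 (R : pzRingType) (x y : R) :
  x * x = x -> y * y = y -> (x + y) * (x + y) = x + y -> x * y *+ 2 = 0.
Proof.
move=> xx yy; rewrite mulrDl !mulrDr xx yy [y * x + y]addrC addrACA -[RHS]addr0.
move=> /addrI sum0.
have xy : x * y = - (x * y * x).
  by apply/eqP; rewrite -addr_eq0 -{1}xx -mulrA -[x * y * x]mulrA -mulrDr sum0 mulr0.
have yx : y * x = - (x * y * x).
  by apply/eqP; rewrite -addr_eq0 addrC -{3}xx mulrA -mulrDl sum0 mul0r.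
by rewrite mulr2n {2}xy -yx sum0.
Qed.

Lemma corner_inverse_perturb (R : pzRingType) (P Q m b X u : R) :
  P * P = P -> m * P = m -> P * b = b -> m * b = Q -> b * m = P ->
  Q * X = X -> X * P = X -> (1 - b * X) * u = 1 -> u * (1 - b * X) = 1 ->
  P * u * b * (m - X) = P /\ (m - X) * (P * u * b) = Q.
Proof.
move=> PP mP Pb mb bm QX XP lu ru.
have PbX : P - b * X = P * (1 - b * X) by rewrite mulrBr mulr1 mulrA Pb.
have bXP : P - b * X = (1 - b * X) * P by rewrite mulrBl mul1r -mulrA XP.
have Pu : P * u = u * P.
  by rewrite -[u * P]mulr1 -lu !mulrA -[u * P * _]mulrA -PbX bXP mulrA ru mul1r.
have bmX : b * (m - X) = P - b * X by rewrite mulrBr bm.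
have mX : m - X = m * (P - b * X) by rewrite mulrBr mP mulrA mb QX.
have PbXPu : (P - b * X) * (P * u) = P.
  by rewrite bXP -mulrA (mulrA P) PP Pu mulrA lu mul1r.
split; first by rewrite -mulrA bmX bXP mulrA -(mulrA P) ru mulr1 PP.
by rewrite mX -mulrA [(P - _) * _]mulrA PbXPu mulrA mP mb.
Qed.

Lemma corner_inverse_lower (R : pzRingType) (r1 r2 s1 s2 M N c : R) :
  r1 * r1 = r1 -> r2 * r2 = r2 -> r2 * r1 = 0 -> s2 * s2 = s2 -> s2 * s1 = 0 ->
  (s1 + s2) * M = M -> M * (r1 + r2) = M ->
  N * M = r1 + r2 -> M * N = s1 + s2 ->
  s2 * M * r1 = 0 -> s1 * M * r1 * c = s1 ->
  s2 * M * r2 * (r2 * N * s2) = s2 /\ r2 * N * s2 * (s2 * M * r2) = r2.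
Proof.
move=> r11 r22 r21 s22 s21 QM MP NM MN s2Mr1 c_rinv.
have s2M : s2 * M = s2 * M * r2 by rewrite -{1}MP !mulrDr !mulrA s2Mr1 add0r.
have Ns1Mr1 : N * (s1 * M * r1) = r1.
  by rewrite -[s1 * M * r1]addr0 -s2Mr1 -!mulrDl QM mulrA NM mulrDl r11 r21 addr0.
have Ns1 : N * s1 = r1 * c by rewrite -{1}c_rinv mulrA Ns1Mr1.
have r2NQMr2 : r2 * N * (s1 + s2) * M * r2 = r2.
  by rewrite -(mulrA _ (s1 + s2)) QM -(mulrA r2) NM mulrDr r21 r22 add0r r22.
split.
  by rewrite !mulrA -(mulrA _ r2 r2) r22 -s2M -(mulrA s2 M) MN mulrDr s21 s22 add0r s22.
rewrite !mulrA -(mulrA _ s2 s2) s22 -[RHS]r2NQMr2 mulrDr !mulrDl -(mulrA r2 N s1) Ns1.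
by rewrite mulrA r21 !mul0r add0r.
Qed.

Lemma corner_inverse_upper (R : pzRingType) (r1 r2 s1 s2 M N c : R) :
  s1 * s1 = s1 -> s2 * s2 = s2 -> s1 * s2 = 0 -> r2 * r2 = r2 -> r1 * r2 = 0 ->
  (s1 + s2) * M = M -> M * (r1 + r2) = M ->
  N * M = r1 + r2 -> M * N = s1 + s2 ->
  s1 * M * r2 = 0 -> c * (s1 * M * r1) = r1 ->
  s2 * M * r2 * (r2 * N * s2) = s2 /\ r2 * N * s2 * (s2 * M * r2) = r2.
Proof.
move=> s11 s22 s12 r22 r12 QM MP NM MN s1Mr2 c_linv.
(* The transposed statement, i.e. [corner_inverse_lower] in the opposite ring. *)
have s1Mr2' : s1 * (M * r2) = 0 by rewrite mulrA.
have c_linv' : c * (s1 * (M * r1)) = r1 by rewrite (mulrA s1).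
have [] : r2 * (N * s2) * (s2 * (M * r2)) = r2 /\ s2 * (M * r2) * (r2 * (N * s2)) = s2.
  exact: (@corner_inverse_lower R^c s1 s2 r1 r2 M N c).
by move=> h1 h2; split; rewrite !mulrA in h1 h2 *.
Qed.

Section OrthogonalDecomposition.
Variables (R : pzRingType) (r1 r2 s1 s2 : R).
Hypotheses (r11 : r1 * r1 = r1) (r22 : r2 * r2 = r2).
Hypotheses (r12 : r1 * r2 = 0) (r21 : r2 * r1 = 0).
Hypotheses (s11 : s1 * s1 = s1) (s22 : s2 * s2 = s2).
Hypotheses (s12 : s1 * s2 = 0) (s21 : s2 * s1 = 0).
Local Notation P := (r1 + r2).
Local Notation Q := (s1 + s2).

Let PP : P * P = P. Proof. by rewrite mulrDl !mulrDr r11 r12 r21 r22 addr0 add0r. Qed.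
Let QQ : Q * Q = Q. Proof. by rewrite mulrDl !mulrDr s11 s12 s21 s22 addr0 add0r. Qed.
Let r1P : r1 * P = r1. Proof. by rewrite mulrDr r11 r12 addr0. Qed.
Let r2P : r2 * P = r2. Proof. by rewrite mulrDr r21 r22 add0r. Qed.
Let s1Q : s1 * Q = s1. Proof. by rewrite mulrDr s11 s12 addr0. Qed.
Let s2Q : s2 * Q = s2. Proof. by rewrite mulrDr s21 s22 add0r. Qed.
Let Qs1 : Q * s1 = s1. Proof. by rewrite mulrDl s11 s21 addr0. Qed.
Let Qs2 : Q * s2 = s2. Proof. by rewrite mulrDl s12 s22 add0r. Qed.
Let Pr1 : P * r1 = r1. Proof. by rewrite mulrDl r11 r21 addr0. Qed.
Let Pr2 : P * r2 = r2. Proof. by rewrite mulrDl r12 r22 add0r. Qed.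

Lemma corner_inverse_of_perturbation (a b c u X : R) :
  b = P * b * Q -> Q * a * P * b = Q -> b * Q * a * P = P ->
  s1 * a * r1 * c = s1 -> c * s1 * a * r1 = r1 ->
  X = s2 * a * r1 \/ X = s1 * a * r2 ->
  (1 - b * X) * u = 1 -> u * (1 - b * X) = 1 ->
  exists d, [/\ d = r2 * d * s2, s2 * a * r2 * d = s2 & d * s2 * a * r2 = r2].
Proof.
move=> hb QaPb bQaP c_rinv c_linv eX lu ru.
have Pb : P * b = b by rewrite hb !mulrA PP.
have [QX XP] : Q * X = X /\ X * P = X.
  by case: eX => ->; rewrite !mulrA (Qs1, Qs2) -!mulrA (r1P, r2P).
have QaPP : Q * a * P * P = Q * a * P by rewrite -mulrA PP.
have bQaP' : b * (Q * a * P) = P by rewrite !mulrA.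
have [NM MN] := corner_inverse_perturb PP QaPP Pb QaPb bQaP' QX XP lu ru.
set N := P * u * b in NM MN; set M := Q * a * P - X in NM MN.
suff [lN rN] : s2 * a * r2 * (r2 * N * s2) = s2 /\ r2 * N * s2 * (s2 * a * r2) = r2.
  exists (r2 * N * s2); split => //; last by move: rN; rewrite !mulrA.
  by rewrite !mulrA r22 -(mulrA _ s2 s2) s22.
have QM : Q * M = M by rewrite /M mulrBr QX !mulrA QQ.
have MP : M * P = M by rewrite /M mulrBl XP -mulrA PP.
have corner x y : x * Q = x -> P * y = y -> x * M * y = x * a * y - x * X * y.
  by move=> xQ Py; rewrite /M mulrBr mulrBl !mulrA xQ -(mulrA _ P y) Py.
(* [M] is block triangular with respect to [Q = s1 + s2] and [P = r1 + r2]. *)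
case: eX => eX.
  have s2Mr1 : s2 * M * r1 = 0.
    by rewrite corner // eX !mulrA s22 -(mulrA _ r1 r1) r11 subrr.
  have s1Mr1 : s1 * M * r1 = s1 * a * r1 by rewrite corner // eX !mulrA s12 !mul0r subr0.
  have s2Mr2 : s2 * M * r2 = s2 * a * r2.
    by rewrite corner // eX !mulrA s22 -(mulrA _ r1 r2) r12 mulr0 subr0.
  by rewrite -s2Mr2; apply: (@corner_inverse_lower _ r1 r2 s1 s2 M N c); rewrite ?s1Mr1.
have s1Mr2 : s1 * M * r2 = 0.
  by rewrite corner // eX !mulrA s11 -(mulrA _ r2 r2) r22 subrr.
have s1Mr1 : s1 * M * r1 = s1 * a * r1.
  by rewrite corner // eX !mulrA -(mulrA _ r2 r1) r21 mulr0 subr0.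
have s2Mr2 : s2 * M * r2 = s2 * a * r2 by rewrite corner // eX !mulrA s21 !mul0r subr0.
rewrite -s2Mr2; apply: (@corner_inverse_upper _ r1 r2 s1 s2 M N c) => //.
by rewrite s1Mr1 !mulrA.
Qed.

End OrthogonalDecomposition.

(* Norms in [A] are real numbers embedded in [R[i]]. *)
Lemma complex_geometric_lt_near (R : realType) (k t e : R[i]) :
  0 <= k -> 0 <= t -> t < 1 -> 0 < e -> \forall n \near \oo, k * t ^+ n < e.
Proof.
move=> /ger0_real/complex_realP[k' ->] /[dup] /ger0_real/complex_realP[x ->] x0 x1.
move=> /[dup] /gtr0_real/complex_realP[y ->] y0.
move: x0 x1 y0; rewrite -[1]/(1%:C)%C -[0]/(0%:C)%C !ltcR ler0c => x0 x1 y0.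
have /cvgr0_norm_lt/(_ y y0) : geometric k' x @ \oo --> 0.
  by apply: cvg_geometric; rewrite ger0_norm.
apply: filterS => n /= kxn.
by rewrite -rmorphXn -rmorphM ltcR (le_lt_trans (ler_norm _)).
Qed.

Lemma cvg0_norm_le_near {K : numFieldType} (V : normedModType K) {T} {F : set_system T}
  {FF : Filter F} (f : T -> V) (g : T -> K) :
  (forall t, `|f t| <= g t) -> (forall e, 0 < e -> \forall t \near F, g t < e) ->
  f @ F --> 0.
Proof.
move=> fg g0; apply/cvgr0Pnorm_lt => e /g0; apply: filterS => t.
exact: le_lt_trans.
Qed.

Lemma cvg_of_dist_le {K : numFieldType} (U V : normedModType K) {T} {F : set_system T}
  {FF : Filter F} (f : T -> U) (g : T -> V) (l : U) (m : V) (k : K) : 0 <= k ->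
  (forall t, `|g t - m| <= k * `|f t - l|) -> f @ F --> l -> g @ F --> m.
Proof.
move=> k0 gf /subr_cvg0/cvgr0_norm_lt fl; apply/subr_cvg0.
have k1 : 0 < k + 1 by rewrite ltr_wpDl.
apply: (cvg0_norm_le_near (g := fun t => (k + 1) * `|f t - l|)).
  by move=> t; rewrite (le_trans (gf t)) // ler_wpM2r // lerDl.
move=> e e0; apply: filterS (fl _ (divr_gt0 e0 k1)) => t.
by rewrite ltr_pdivlMr // mulrC.
Qed.

Lemma geometric_tail_le (K : numFieldType) (t : K) m n : 0 <= t -> t < 1 ->
  \sum_(m <= k < n) t ^+ k <= t ^+ m / (1 - t).
Proof.
move=> t0 t1; have t1' : 0 < 1 - t by rewrite subr_gt0.
case: (leqP n m) => [nm|/ltnW mn].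
  by rewrite big_geq // divr_ge0 ?exprn_ge0 // ltW.
rewrite -(subnKC mn) geometric_partial_tail geometric_seriesE ?lt_eqF //=.
by rewrite ler_wpM2r ?invr_ge0 ?(ltW t1') // ler_piMr ?exprn_ge0 // gerBl exprn_ge0.
Qed.

Lemma geometric_sum_mulBl (R : pzRingType) (x : R) n :
  (1 - x) * \sum_(k < n) x ^+ k = 1 - x ^+ n.
Proof. by rewrite -opprB mulNr -subrX1 opprB. Qed.

Lemma geometric_sum_mulBr (R : pzRingType) (x : R) n :
  (\sum_(k < n) x ^+ k) * (1 - x) = 1 - x ^+ n.
Proof.
have x_1Bx : GRing.comm (1 - x) x.
  by apply/commr_sym/commrB; [exact: commr1 | exact: commr_refl].
by rewrite -commr_sum ?geometric_sum_mulBl // => k _; exact: commrX.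
Qed.

Section CStarRing.
Variables (R : realType) (A : completeNormedModType R[i]) (C : CStarAlg A).

(* [A] as a ring under the product of [C]; the argument makes the ring instance
   depend on [C]. *)
Definition cstar_ring of CStarAlg A : Type := A.
Local Notation AR := (cstar_ring C).
HB.instance Definition _ := CompleteNormedModule.on AR.
HB.instance Definition _ := GRing.Zmodule_isPzRing.Build AR
  (cmulA C) (cmul1l C) (cmul1r C) (cmulDl C) (cmulDr C).

Lemma normrM_le (x y : AR) : `|x * y| <= `|x| * `|y|.
Proof. exact: cnorm_mul. Qed.

Lemma normrX_le (x : AR) n : `|x ^+ n| <= `|1 : AR| * `|x| ^+ n.
Proof.
elim: n => [|n IHn]; first by rewrite !expr0 mulr1.
by rewrite exprS (le_trans (normrM_le _ _)) // exprS mulrCA ler_wpM2l.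
Qed.

Lemma cvg_mull {T} {F : set_system T} {FF : Filter F} (y : AR) (f : T -> AR) (l : AR) :
  f @ F --> l -> y * f t @[t --> F] --> y * l.
Proof. by apply: cvg_of_dist_le (normr_ge0 y) _ => t; rewrite -mulrBr normrM_le. Qed.

Lemma cvg_mulr {T} {F : set_system T} {FF : Filter F} (y : AR) (f : T -> AR) (l : AR) :
  f @ F --> l -> f t * y @[t --> F] --> l * y.
Proof. by apply: cvg_of_dist_le (normr_ge0 y) _ => t; rewrite -mulrBl mulrC normrM_le. Qed.

Lemma neumann_series_inverse (x : AR) : `|x| < 1 ->
  exists u : AR, (1 - x) * u = 1 /\ u * (1 - x) = 1.
Proof.
move=> x1; have x0 := normr_ge0 x; have gap : 0 < 1 - `|x| by rewrite subr_gt0.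
set S := series (fun k => x ^+ k).
have Sx n : S n = \sum_(k < n) x ^+ k by rewrite /S /series /= big_mkord.
have tail m n : `|\sum_(m <= k < n) x ^+ k| <= `|1 : AR| / (1 - `|x|) * `|x| ^+ m.
  rewrite (le_trans (ler_norm_sum _ _ _)) //.
  rewrite (le_trans (ler_sum _ (fun k _ => normrX_le x k))) //.
  by rewrite -mulr_sumr mulrAC -mulrA ler_wpM2l // geometric_tail_le.
have /cvg_ex[u Su] : cvgn S.
  apply/cauchy_cvgP/cauchy_seriesP => e e0.
  have K0 : 0 <= `|1 : AR| / (1 - `|x|) by rewrite divr_ge0 // ltW.
  have [N _ HN] := complex_geometric_lt_near K0 x0 x1 e0.
  exists ([set k | (N <= k)%N], setT) => /=; first by split => //; exists N.
  by move=> [m n] /= [Nm _]; apply: le_lt_trans (tail m n) (HN m Nm).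
have xn0 : x ^+ n @[n --> \oo] --> 0.
  apply: (cvg0_norm_le_near (g := fun n => `|1 : AR| * `|x| ^+ n)) => [n|e].
    exact: normrX_le.
  exact: complex_geometric_lt_near (normr_ge0 _) x0 x1.
have S1 : 1 - x ^+ n @[n --> \oo] --> (1 : AR).
  by rewrite -[X in _ --> X]subr0; apply: cvgB => //; exact: cvg_cst.
exists u; split; apply: norm_cvg_unique S1.
- have -> : (fun n => 1 - x ^+ n) = (fun n => (1 - x) * S n).
    by apply/funext => n; rewrite Sx geometric_sum_mulBl.
  exact: cvg_mull.
- have -> : (fun n => 1 - x ^+ n) = (fun n => S n * (1 - x)).
    by apply/funext => n; rewrite Sx geometric_sum_mulBr.
  exact: cvg_mulr.
Qed.

Lemma projection_idem (x : AR) : is_projection C x -> x * x = x.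
Proof. by case. Qed.

Lemma pq_inverseE (p q a b : AR) : pq_inverse C p q a b <->
  [/\ b = (1 - p) * b * (1 - q), (1 - q) * a * (1 - p) * b = 1 - q
     & b * (1 - q) * a * (1 - p) = 1 - p].
Proof. by []. Qed.

Lemma idemD_orthogonal (x y : AR) : x * x = x -> y * y = y ->
  (x + y) * (x + y) = x + y -> x * y = 0.
Proof.
move=> xx yy /(idemD_mul2n_eq0 xx yy)/eqP.
by rewrite -scaler_nat scaler_eq0 pnatr_eq0 => /eqP.
Qed.

Lemma orthogonal_of_idem_compl (p x y : AR) : p * p = p -> x * x = x -> y * y = y ->
  1 - p = x + y -> x * y = 0 /\ y * x = 0.
Proof.
move=> pp xx yy pxy; have xy2 : (x + y) * (x + y) = x + y.
  by rewrite -pxy mulrBl mul1r mulrBr mulr1 pp subrr subr0.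
split; first exact: idemD_orthogonal.
by apply: idemD_orthogonal; rewrite // addrC.
Qed.

End CStarRing.

Theorem mainTheorem10 (R : realType) (A : completeNormedModType R[i])
  (C : CStarAlg A) (a p q b r1 r2 s1 s2 : A) :
  is_projection C p -> is_projection C q ->
  pq_inverse C p q a b ->
  is_projection C r1 -> is_projection C r2 ->
  is_projection C s1 -> is_projection C s2 ->
  cone C - p = r1 + r2 -> cone C - q = s1 + s2 ->
  invertible_upto C (cone C - r1) (cone C - s1) a ->
  (`|cmul C (cmul C s2 a) r1| * `|b| < 1 \/
   `|cmul C (cmul C s1 a) r2| * `|b| < 1) ->
  invertible_upto C (cone C - r2) (cone C - s2) a.
Proof.
move=> /projection_idem pp /projection_idem qq /pq_inverseE[hb QaPb bQaP].
move=> /projection_idem r11 /projection_idem r22 /projection_idem s11 /projection_idem s22.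
move=> P_r Q_s [c /pq_inverseE[_]]; rewrite !subKr => c_rinv c_linv small.
have [r12 r21] := orthogonal_of_idem_compl pp r11 r22 P_r.
have [s12 s21] := orthogonal_of_idem_compl qq s11 s22 Q_s.
rewrite P_r Q_s in hb QaPb bQaP.
pose AR := cstar_ring C.
have [X eX [u [lu ru]]] : exists2 X : AR, X = (s2 : AR) * a * r1 \/ X = (s1 : AR) * a * r2 &
    exists u, (1 - (b : AR) * X) * u = 1 /\ u * (1 - (b : AR) * X) = 1.
  case: small => small; [exists ((s2 : AR) * a * r1); first by left |
                         exists ((s1 : AR) * a * r2); first by right];
  by apply: neumann_series_inverse; rewrite (le_lt_trans (normrM_le _ _)) // mulrC.
have [d hd] := corner_inverse_of_perturbation r11 r22 r12 r21 s11 s22 s12 s21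
  hb QaPb bQaP c_rinv c_linv eX lu ru.
by exists d; apply/pq_inverseE; rewrite !subKr.
Qed.
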